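(* Let $(X,\varepsilon)$ and $(Y,\zeta)$ be locally compact paracompact Hausdorff spaces with coarsely connected proper coarse structures, and let $X+_fW\in\mathrm{Pers}(\varepsilon)$. Let $\pi,\pi':Y\to X$ be coarse maps and define $f^\ast(A)=\mathrm{Cl}_W\big(f(\mathrm{Cl}_X(\pi(A)))\big)$ and $f'^\ast(A)=\mathrm{Cl}_W\big(f(\mathrm{Cl}_X(\pi'(A)))\big)$ for $A$ closed in $Y$. If $\pi$ is close to $\pi'$, then $f^\ast=f'^\ast$.
   Context: $X+_fW$ is $X\sqcup W$ with closed sets the $D$ with $D\cap X$ closed in $X$, $D\cap W$ closed in $W$, $f(D\cap X)\subseteq D$, where $f$ (from closed subsets of $X$ to closed subsets of $W$) sends $\emptyset$ to $\emptyset$ and preserves finite unions. Coarse structures, proper and coarsely connected coarse spaces, coarse maps and closeness are in the sense of Roe ($\pi,\pi'$ close means $\{(\pi(y),\pi'(y)):y\in Y\}\in\varepsilon$). $X+_fW\in\mathrm{Pers}(\varepsilon)$ means: $X+_fW$ is compact Hausdorff with $X$ dense, $W$ compact Hausdorff, and every $e\in\varepsilon$ is perspective, i.e. $\mathrm{Cl}_{(X+_fW)^2}(e)\cap((X+_fW)^2-X^2)\subseteq\{(p,p):p\in W\}$. *)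

From HB Require Import structures.
From mathcomp Require Import all_boot all_order all_algebra.
From mathcomp Require Import all_classical all_reals all_analysis.
Set Implicit Arguments. Unset Strict Implicit. Unset Printing Implicit Defensive.
Import Order.TTheory GRing.Theory Num.Theory.
Local Open Scope classical_set_scope.

Definition locally_finite_family (T : topologicalType) (I : Type)
    (U : I -> set T) : Prop :=
  forall x : T, exists N : set T,
    nbhs x N /\ finite_set [set i | U i `&` N !=set0].

Definition paracompact (T : topologicalType) : Prop :=
  forall (I : Type) (U : I -> set T),
    (forall i, open (U i)) -> \bigcup_i U i = setT ->
    exists (J : Type) (V : J -> set T),
      [/\ forall j, open (V j),
          \bigcup_j V j = setT,
          forall j, exists i, V j `<=` U i
        & locally_finite_family V].

Definition diagonal (X : Type) : set (X * X) := [set p | p.1 = p.2].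

Definition ent_inv (X : Type) (e : set (X * X)) : set (X * X) :=
  [set p | e (p.2, p.1)].

Definition ent_comp (X : Type) (e1 e2 : set (X * X)) : set (X * X) :=
  [set p | exists y, e1 (p.1, y) /\ e2 (y, p.2)].

Definition is_coarse_structure (X : Type) (E : set_system (X * X)) : Prop :=
  [/\ E (@diagonal X),
      forall e e', E e -> e' `<=` e -> E e',
      forall e, E e -> E (ent_inv e),
      forall e1 e2, E e1 -> E e2 -> E (ent_comp e1 e2)
    & forall e1 e2, E e1 -> E e2 -> E (e1 `|` e2)].

Definition coarse_bounded (X : Type) (E : set_system (X * X)) (B : set X) :=
  E (B `*` B).

Definition coarsely_connected (X : Type) (E : set_system (X * X)) :=
  forall x y : X, E [set (x, y)].

Definition proper_coarse (X : topologicalType) (E : set_system (X * X)) :=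
  [/\ is_coarse_structure E,
      exists e, E e /\ exists U : set (X * X),
                  [/\ open U, @diagonal X `<=` U & U `<=` e]
    & forall B, coarse_bounded E B -> compact (closure B)].

Definition coarse_map (Y X : Type) (zeta : set_system (Y * Y))
    (eps : set_system (X * X)) (pi : Y -> X) : Prop :=
  (forall e, zeta e -> eps [set (pi p.1, pi p.2) | p in e]) /\
  (forall B, coarse_bounded eps B -> coarse_bounded zeta (pi @^-1` B)).

Definition close_maps (Y X : Type) (eps : set_system (X * X))
    (pi pi' : Y -> X) : Prop :=
  eps [set (pi y, pi' y) | y in [set: Y]].

(* f : closed subsets of X -> closed subsets of W, sending the empty set
   to the empty set and preserving finite unions.  Only its values on
   closed sets are ever used. *)
Record bdry_map (X W : topologicalType) := BdryMap {
  bdry_fun :> set X -> set W;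
  bdry_closed : forall A, closed A -> closed (bdry_fun A);
  bdry0 : bdry_fun set0 = set0;
  bdryU : forall A B, closed A -> closed B ->
            bdry_fun (A `|` B) = bdry_fun A `|` bdry_fun B }.

Definition sumf (X W : topologicalType) (f : bdry_map X W) : Type :=
  (X + W)%type.

Definition sumf_closed (X W : topologicalType) (f : bdry_map X W)
    (D : set (X + W)) : Prop :=
  [/\ closed (@inl X W @^-1` D), closed (@inr X W @^-1` D)
    & f (@inl X W @^-1` D) `<=` @inr X W @^-1` D].

Definition sumf_open (X W : topologicalType) (f : bdry_map X W)
    (U : set (X + W)) : Prop := sumf_closed f (~` U).

Lemma bdry_mono (X W : topologicalType) (f : bdry_map X W) (A B : set X) :
  closed A -> closed B -> A `<=` B -> f A `<=` f B.
Proof.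
move=> cA cB AB; have -> : B = A `|` B by rewrite setUidr.
by rewrite bdryU //; apply: subsetUl.
Qed.

Lemma sumf_openT (X W : topologicalType) (f : bdry_map X W) :
  sumf_open f setT.
Proof.
rewrite /sumf_open /sumf_closed setCT !preimage_set0 bdry0.
by split => //; apply: closed0.
Qed.

Lemma sumf_openI (X W : topologicalType) (f : bdry_map X W) :
  setI_closed (sumf_open f).
Proof.
move=> A B [cA1 cA2 sA] [cB1 cB2 sB].
rewrite /sumf_open /sumf_closed setCI !preimage_setU.
split; [exact: closedU|exact: closedU|].
rewrite bdryU //; exact: setUSS.
Qed.

Lemma sumf_open_bigU (X W : topologicalType) (f : bdry_map X W)
    (I : Type) (F : I -> set (X + W)) :
  (forall i, sumf_open f (F i)) -> sumf_open f (\bigcup_i F i).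
Proof.
move=> HF; rewrite /sumf_open /sumf_closed setC_bigcup !preimage_bigcap.
have c1 : closed (\bigcap_(i in [set: I]) (@inl X W @^-1` (~` F i))).
  by apply: closed_bigI => i _; case: (HF i).
split => //.
  by apply: closed_bigI => i _; case: (HF i).
move=> w fw i _; case: (HF i) => ci _ si; apply: si.
by apply: (bdry_mono c1 ci _ fw) => x; apply.
Qed.

HB.instance Definition _ (X W : topologicalType) (f : bdry_map X W) :=
  Choice.on (sumf f).

HB.instance Definition _ (X W : topologicalType) (f : bdry_map X W) :=
  isOpenTopological.Build (sumf f)
    (@sumf_openT X W f) (@sumf_openI X W f) (@sumf_open_bigU X W f).

Definition sumf_inl (X W : topologicalType) (f : bdry_map X W) :
  X -> sumf f := @inl X W.
Definition sumf_inr (X W : topologicalType) (f : bdry_map X W) :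
  W -> sumf f := @inr X W.

Definition perspective (X W : topologicalType) (f : bdry_map X W)
    (e : set (X * X)) : Prop :=
  closure [set ((sumf_inl f p.1, sumf_inl f p.2) : sumf f * sumf f) | p in e]
    `&` ~` [set q : sumf f * sumf f | exists a b, q = (sumf_inl f a, sumf_inl f b)]
  `<=` [set (sumf_inr f w, sumf_inr f w) | w in [set: W]].

Definition Pers (X W : topologicalType) (f : bdry_map X W)
    (eps : set_system (X * X)) : Prop :=
  [/\ compact [set: sumf f], hausdorff_space (sumf f),
      dense (range (sumf_inl f)),
      compact [set: W] /\ hausdorff_space W
    & forall e, eps e -> perspective f e].

Definition fstar (Y X W : topologicalType) (f : bdry_map X W)
    (pi : Y -> X) (A : set Y) : set W :=
  closure (f (closure (pi @` A))).

From HB Require Import structures.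
From mathcomp Require Import all_boot all_order all_algebra.
From mathcomp Require Import all_classical all_reals all_analysis.
Set Implicit Arguments. Unset Strict Implicit.
Local Open Scope classical_set_scope.

(* If w lies in f(Cl pi(A)), then inr w is a limit of points inl (pi y), y in A.
   Compactness of (X +_f W)^2 turns this into a limit point q of the pairs
   (inl (pi y), inl (pi' y)) with first coordinate inr w.  These pairs lie in
   the entourage witnessing that pi and pi' are close, which is perspective,
   so q is diagonal, q = (inr w, inr w); hence inr w is also a limit of the
   points inl (pi' y), i.e. w lies in f(Cl pi'(A)).  Exchanging pi and pi'
   uses that entourages are closed under inversion. *)

Lemma image_closure_subset (T U : topologicalType) (g : T -> U) (S : set T) :
  continuous g -> g @` closure S `<=` closure (g @` S).
Proof.
move=> /continuous_closedP g_closed _ [x Sx <-].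
have : closure S `<=` g @^-1` closure (g @` S).
  rewrite closureE => z; apply; split; first exact: g_closed (@closed_closure _ _).
  by move=> y Sy; apply: subset_closure; exists y.
exact.
Qed.

Lemma closure_image_fst (T U : topologicalType) (E : set (T * U)) :
  hausdorff_space T -> compact (closure E) ->
  closure (fst @` E) = fst @` closure E.
Proof.
move=> hT cE; apply/seteqP; split; last first.
  by apply: image_closure_subset => x; exact: cvg_fst.
have /compact_closed/closure_id -> // : compact (fst @` closure E).
  by apply: continuous_compact => //; apply: continuous_subspaceT => x;
    exact: cvg_fst.
by apply/closureS/image_subset/subset_closure.
Qed.

Section BoundaryClosure.
Variables (X W : topologicalType) (f : bdry_map X W).

Lemma sumf_closedE (D : set (sumf f)) : closed D <-> sumf_closed f D.
Proof. by rewrite -openC /open /= /sumf_open setCK. Qed.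

Lemma continuous_sumf_inl : continuous (sumf_inl f).
Proof.
by apply/continuous_closedP => D /sumf_closedE [].
Qed.

Lemma closure_sumf_inl_closed (C : set X) (w : W) : closed C ->
  closure (sumf_inl f @` C) (sumf_inr f w) <-> f C w.
Proof.
move=> cC; rewrite closureE; split.
  pose D : set (sumf f) :=
    fun z => match z with inl x => C x | inr v => f C v end.
  move=> /(_ D); apply; split; last by move=> _ [x Cx <-].
  by apply/sumf_closedE; split; [exact: cC | exact: bdry_closed |].
move=> fCw D [/sumf_closedE [cDl _ fD] CD]; apply/fD/(bdry_mono cC cDl _ fCw).
by move=> x Cx; apply: CD; exists x.
Qed.

Lemma closure_sumf_inl (S : set X) (w : W) :
  closure (sumf_inl f @` S) (sumf_inr f w) <-> f (closure S) w.
Proof.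
rewrite -closure_sumf_inl_closed; last exact: closed_closure.
suff -> : closure (sumf_inl f @` closure S) = closure (sumf_inl f @` S) by [].
apply/seteqP; split; last exact/closureS/image_subset/subset_closure.
rewrite [X in _ `<=` X](closure_id _).1; last exact: closed_closure.
exact/closureS/image_closure_subset/continuous_sumf_inl.
Qed.

End BoundaryClosure.

Section Perspective.
Variables (X Y W : topologicalType) (f : bdry_map X W).
Hypotheses (sumf_compact : compact [set: sumf f])
  (sumf_hausdorff : hausdorff_space (sumf f)).

Lemma perspective_bdry_closure_subset (e : set (X * X)) (g g' : Y -> X)
    (A : set Y) :
  perspective f e -> (forall y, A y -> e (g y, g' y)) ->
  f (closure (g @` A)) `<=` f (closure (g' @` A)).
Proof.
move=> e_persp close_on_A w.
set E := [set ((sumf_inl f (g y), sumf_inl f (g' y)) : sumf f * sumf f)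
          | y in A].
have fstE : fst @` E = sumf_inl f @` (g @` A) by rewrite !image_comp.
have sndE : snd @` E = sumf_inl f @` (g' @` A) by rewrite !image_comp.
have E_compact : compact (closure E).
  by apply: (subclosed_compact (@closed_closure _ E)
              (compact_setX sumf_compact sumf_compact)).
rewrite -!closure_sumf_inl -fstE -sndE closure_image_fst //.
move=> [q Eq q1w].
have [v _ qv] : [set (sumf_inr f v, sumf_inr f v) | v in [set: W]] q.
  apply: e_persp; split.
    by apply: closureS Eq => _ [y Ay <-]; exists (g y, g' y); first exact: close_on_A.
  by move=> [a [b qab]]; rewrite qab in q1w.
apply: (@image_closure_subset _ _ snd) => [x|]; first exact: cvg_snd.
exists q => //.
by rewrite -qv in q1w *.
Qed.

Lemma fstar_eq_close (e : set (X * X)) (pi pi' : Y -> X) :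
  perspective f e -> perspective f (ent_inv e) ->
  (forall y, e (pi y, pi' y)) -> fstar f pi = fstar f pi'.
Proof.
move=> e_persp inv_persp close; apply/funext => A; rewrite /fstar; congr closure.
apply/seteqP; split.
  by apply: (perspective_bdry_closure_subset e_persp) => y _; exact: close.
by apply: (perspective_bdry_closure_subset inv_persp) => y _; exact: close.
Qed.

End Perspective.

Theorem mainTheorem20
  (X Y W : topologicalType)
  (eps : set_system (X * X)) (zeta : set_system (Y * Y))
  (f : bdry_map X W) (pi pi' : Y -> X) :
  locally_compact [set: X] -> paracompact X -> hausdorff_space X ->
  locally_compact [set: Y] -> paracompact Y -> hausdorff_space Y ->
  proper_coarse eps -> coarsely_connected eps ->
  proper_coarse zeta -> coarsely_connected zeta ->
  Pers f eps ->
  coarse_map zeta eps pi -> coarse_map zeta eps pi' ->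
  close_maps eps pi pi' ->
  forall A : set Y, closed A -> fstar f pi A = fstar f pi' A.
Proof.
move=> _ _ _ _ _ _ [[_ _ eps_inv _ _] _ _] _ _ _ [cT hT _ _ eps_persp] _ _.
move=> close A _.
suff -> : fstar f pi = fstar f pi' by [].
apply: (fstar_eq_close cT hT (eps_persp _ close) (eps_persp _ (eps_inv _ close))).
by move=> y; exists y.
Qed.
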